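(* Let $M$ be a model with borders, let $M^s$ be its submodel of separated points, and let $r:\mathcal U(M^s)\to\mathcal U(M)$ be the map \[ r(V)=\{x\in M \mid \forall y\ge x\ (y\in M^s \Rightarrow y\in V)\} \] (the upper adjoint of the restriction map $q:\mathcal U(M)\to\mathcal U(M^s)$, $q(W)=W\cap M^s$). Then $r$ preserves binary meets and Heyting implication, and for every $(\wedge,\to)$-formula $\varphi$ we have $v(\varphi)=r(v^s(\varphi))$; that is, for every $x\in M$, \[ M,x\models\varphi \iff \forall y\ge x\ \big(y\in M^s \Rightarrow M^s,y\models\varphi\big). \]
   Context: Fix $n\ge1$ and variables $p_1,\dots,p_n$; $2^n=\{0,1\}^n$ with componentwise order. A model is $(M,\le,c)$, $(M,\le)$ a poset, $c:M\to 2^n$ order-preserving, with intuitionistic Kripke semantics ($x\models p_i$ iff $c(x)_i=1$; $x\models\varphi\to\psi$ iff every $y\ge x$ satisfying $\varphi$ satisfies $\psi$; etc.). $\mathcal U(X)$ denotes the Heyting algebra of up-sets of a poset $X$. $v(\varphi)$ is the set of points of $M$ satisfying $\varphi$. A $(\wedge,\to)$-formula uses only $\wedge$ and $\to$. A point $x$ is a $q$-border point if $x\not\models q$ and all $y>x$ satisfy $q$; $x$ is separated if it is a $q$-border point for some variable $q$. $M^s$ is the set of separated points with the restricted order and colouring, regarded as a model in its own right (satisfaction in $M^s$ computed w.r.t. its own order); $v^s(\varphi)$ is the set of points of $M^s$ satisfying $\varphi$ in $M^s$. $M$ has borders if for every variable $p$ and every $x\in M$ with $x\not\models p$ there is a $p$-border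 point $y\ge x$. *)

From mathcomp Require Import all_boot.
Set Implicit Arguments. Unset Strict Implicit. Unset Printing Implicit Defensive.

Inductive form (n : nat) : Type :=
| Var : 'I_n -> form n
| Bot : form n
| Top : form n
| And : form n -> form n -> form n
| Or  : form n -> form n -> form n
| Imp : form n -> form n -> form n.
Arguments Bot {n}. Arguments Top {n}.

Fixpoint is_and_imp n (f : form n) : Prop :=
  match f with
  | Var _ => True
  | And a b => is_and_imp a /\ is_and_imp b
  | Imp a b => is_and_imp a /\ is_and_imp b
  | _ => False
  end.

Section Kripke.
Variables (n : nat) (T : Type) (le : T -> T -> Prop) (c : T -> 'I_n -> bool).

Fixpoint sat (x : T) (f : form n) : Prop :=
  match f with
  | Var i => c x i = true
  | Bot => False
  | Top => True
  | And a b => sat x a /\ sat x b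
  | Or a b => sat x a \/ sat x b
  | Imp a b => forall y, le x y -> sat y a -> sat y b
  end.

Definition is_poset : Prop :=
  (forall x, le x x) /\ (forall x y z, le x y -> le y z -> le x z) /\
  (forall x y, le x y -> le y x -> x = y).

Definition col_monotone : Prop :=
  forall x y, le x y -> forall i, c x i = true -> c y i = true.

Definition lt (x y : T) : Prop := le x y /\ x <> y.

Definition border (q : 'I_n) (x : T) : Prop :=
  c x q = false /\ forall y, lt x y -> c y q = true.

Definition separated (x : T) : Prop := exists q, border q x.

Definition has_borders : Prop :=
  forall (p : 'I_n) x, c x p = false -> exists y, le x y /\ border p y.

Definition is_upset (V : T -> Prop) : Prop := forall x y, le x y -> V x -> V y.
Definition himp (V W : T -> Prop) : T -> Prop :=
  fun x => forall y, le x y -> V y -> W y.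

Definition Ms : Type := {x : T | separated x}.
Definition le_s (a b : Ms) : Prop := le (proj1_sig a) (proj1_sig b).
Definition c_s (a : Ms) : 'I_n -> bool := c (proj1_sig a).

Definition r (V : Ms -> Prop) : T -> Prop :=
  fun x => forall z : Ms, le x (proj1_sig z) -> V z.
End Kripke.

From mathcomp Require Import all_boot.

(* The map r only looks above x, so it commutes with meets outright, and with
   implication because a separated point above an M-point y is also above x.
   The translation v(phi) = r(v^s(phi)) then goes by induction on phi: the
   connectives are handled by these two preservation properties, and a
   variable p fails at x exactly when it fails at some p-border point above x,
   which is separated. *)

Lemma sat_upset (n : nat) (T : Type) (le : T -> T -> Prop) (c : T -> 'I_n -> bool) :
  (forall x y z, le x y -> le y z -> le x z) -> col_monotone le c ->
  forall f, is_upset le (fun x => sat le c x f).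
Proof.
move=> le_trans c_mono; elim=> [i| | |a IHa b IHb|a IHa b IHb|a IHa b IHb] x y le_xy /=.
- exact: c_mono.
- by [].
- by [].
- by case=> ? ?; split; [apply: IHa le_xy _ | apply: IHb le_xy _].
- by case=> ?; [left; apply: IHa le_xy _ | right; apply: IHb le_xy _].
- by move=> sat_ab z le_yz; apply: sat_ab; apply: le_trans le_yz.
Qed.

Section SeparatedPoints.

Variables (n : nat) (T : Type) (le : T -> T -> Prop) (c : T -> 'I_n -> bool).
Hypothesis le_refl : forall x, le x x.
Hypothesis le_trans : forall {x y z}, le x y -> le y z -> le x z.
Hypothesis c_mono : col_monotone le c.

Local Notation Ms := (Ms le c).
Local Notation le_s := (@le_s n T le c).
Local Notation sat_s := (sat le_s (@c_s n T le c)).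
Local Notation r := (@r n T le c).

Lemma r_meet (V W : Ms -> Prop) x :
  r (fun z => V z /\ W z) x <-> r V x /\ r W x.
Proof.
split=> [rVW | [rV rW] z le_xz]; last by split; [apply: rV | apply: rW].
by split=> z le_xz; case: (rVW z le_xz).
Qed.

Lemma r_himp (V W : Ms -> Prop) x :
  is_upset le_s V -> r (himp le_s V W) x <-> himp le (r V) (r W) x.
Proof.
move=> V_up; split.
- move=> rVW y le_xy rVy z le_yz.
  exact: (rVW z (le_trans le_xy le_yz) z (le_refl (proj1_sig z)) (rVy z le_yz)).
- move=> rVW z le_xz z' le_zz' Vz'.
  apply: (rVW (proj1_sig z') (le_trans le_xz le_zz')) (le_refl _).
  by move=> z'' le_z'z''; apply: V_up Vz'.
Qed.

Lemma sat_s_upset f : is_upset le_s (fun z => sat_s z f).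
Proof.
apply: sat_upset => [x y z | x y le_xy i]; first exact: le_trans.
exact: c_mono.
Qed.

Lemma sat_var_r : has_borders le c ->
  forall i x, c x i = true <-> r (fun z => c_s z i) x.
Proof.
move=> borders i x; split=> [cxi z le_xz | rx]; first exact: c_mono cxi.
case cxi: (c x i) => //.
have [y [le_xy border_y]] := borders i x cxi.
have := rx (exist _ y (ex_intro _ i border_y)) le_xy.
by rewrite /c_s /= (proj1 border_y).
Qed.

Lemma sat_and_imp_r : has_borders le c ->
  forall f, is_and_imp f -> forall x, sat le c x f <-> r (fun z => sat_s z f) x.
Proof.
move=> borders; elim=> [i| | |a IHa b IHb|_ _ _ _|a IHa b IHb] //= f_ai x.
- exact: sat_var_r.
- case: f_ai => /IHa sat_a /IHb sat_b.
  apply: iff_trans (iff_sym (r_meet _ _ x)).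
  by split=> -[? ?]; split; by [apply/sat_a | apply/sat_b].
- case: f_ai => /IHa sat_a /IHb sat_b.
  apply: iff_trans (iff_sym (r_himp _ _ x (sat_s_upset a))).
  by split=> ab y le_xy /sat_a ay; apply/sat_b; apply: ab.
Qed.

End SeparatedPoints.

Theorem lemma3p10 (n : nat) (T : Type) (le : T -> T -> Prop)
    (c : T -> 'I_n -> bool)
    (Hn : 0 < n) (Hpo : is_poset le) (Hc : col_monotone le c)
    (Hb : has_borders le c) :
  (forall V W : Ms le c -> Prop,
     is_upset (@le_s n T le c) V -> is_upset (@le_s n T le c) W ->
     forall x, r (fun z => V z /\ W z) x <-> (r V x /\ r W x)) /\
  (forall V W : Ms le c -> Prop,
     is_upset (@le_s n T le c) V -> is_upset (@le_s n T le c) W ->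
     forall x, r (himp (@le_s n T le c) V W) x <-> himp le (r V) (r W) x) /\
  (forall f : form n, is_and_imp f ->
     forall x, sat le c x f <->
       (forall z : Ms le c, le x (proj1_sig z) -> sat (@le_s n T le c) (@c_s n T le c) z f)).
Proof.
case: Hpo => le_refl [le_trans _].
split; [|split].
- by move=> V W _ _ x; apply: r_meet.
- by move=> V W V_up _ x; apply: r_himp.
- exact: sat_and_imp_r.
Qed.
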